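(* Let $0<\lambda,\lambda'<1$ and $0<\beta,\beta'<1$. Then $\mathcal{B}'(\lambda',\beta')\cong\mathcal{B}'(\lambda,\beta)$ as $\mathbb{R}$-algebras if and only if $\lambda'=\lambda$ and $\beta'\in\{\beta,1-\beta\}$. In particular, two algebras with $(\lambda',\beta')\neq(\lambda,\beta)$ are isomorphic if and only if $\lambda'=\lambda$ and $\beta'=1-\beta$.
   Context: For real parameters $0<\lambda<1$ and $0<\beta<1$, $\mathcal{B}'(\lambda,\beta)$ denotes the commutative (non-associative) $4$-dimensional real algebra with basis $\{o,a,b,c\}$ whose bilinear commutative multiplication $\circ$ is determined by $o\circ o=o$, $o\circ a=\lambda a$, $o\circ b=\lambda b$, $a\circ a=a$, $b\circ b=b$, $a\circ b=\frac{\lambda-\beta}{\lambda}a+\frac{\lambda+\beta-1}{\lambda}b+c$, and $c\circ x=x\circ c=0$ for every $x$. (In the paper the basis vector $c$ is written $ab$.) *)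

From Stdlib Require Import Reals Lra.
Open Scope R_scope.

(* Elements of the 4-dimensional real vector space with basis {o,a,b,c},
   written in coordinates. *)
Record V4 : Type := mkV4 { co : R ; ca : R ; cb : R ; cc : R }.

Definition vzero : V4 := mkV4 0 0 0 0.
Definition vadd (x y : V4) : V4 :=
  mkV4 (co x + co y) (ca x + ca y) (cb x + cb y) (cc x + cc y).
Definition vscale (t : R) (x : V4) : V4 :=
  mkV4 (t * co x) (t * ca x) (t * cb x) (t * cc x).

Inductive idx : Type := Io | Ia | Ib | Ic.

Definition coord (x : V4) (i : idx) : R :=
  match i with Io => co x | Ia => ca x | Ib => cb x | Ic => cc x end.

(* Multiplication table of B'(lambda,beta) on basis vectors. *)
Definition tbl (lam bet : R) (i j : idx) : V4 :=
  match i, j with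
  | Io, Io => mkV4 1 0 0 0
  | Io, Ia | Ia, Io => mkV4 0 lam 0 0
  | Io, Ib | Ib, Io => mkV4 0 0 lam 0
  | Ia, Ia => mkV4 0 1 0 0
  | Ib, Ib => mkV4 0 0 1 0
  | Ia, Ib | Ib, Ia =>
      mkV4 0 ((lam - bet) / lam) ((lam + bet - 1) / lam) 1
  | Ic, _ | _, Ic => vzero
  end.

Definition all_idx : list idx := Io :: Ia :: Ib :: Ic :: nil.

Definition bmul (lam bet : R) (x y : V4) : V4 :=
  List.fold_right vadd vzero
    (List.flat_map (fun i =>
       List.map (fun j => vscale (coord x i * coord y j) (tbl lam bet i j))
                all_idx) all_idx).

Definition alg_iso (lam1 bet1 lam2 bet2 : R) (f : V4 -> V4) : Prop :=
  (forall x y, f (vadd x y) = vadd (f x) (f y)) /\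
  (forall t x, f (vscale t x) = vscale t (f x)) /\
  (forall x y, f x = f y -> x = y) /\
  (forall y, exists x, f x = y) /\
  (forall x y, f (bmul lam1 bet1 x y) = bmul lam2 bet2 (f x) (f y)).

Definition B'_isomorphic (lam1 bet1 lam2 bet2 : R) : Prop :=
  exists f : V4 -> V4, alg_iso lam1 bet1 lam2 bet2 f.

(* An isomorphism f preserves the annihilator R c, so it induces an isomorphism
   modulo c.  Idempotency and o a = lam a force f o to have o-coordinate 1 and
   f a, f b to have o-coordinate 0; since f a, f b span span(a, b) modulo c and
   are eigenvectors of multiplication by f o for lam', that multiplication is
   scalar there, which forces f o = o and lam' = lam.  Then f a and f b are
   idempotents in span(a, b), hence {f a, f b} = {a, b}, and the a-coordinate of
   f a o f b gives bet' = bet or bet' = 1 - bet.  Conversely the identity and the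
   swap a <-> b are isomorphisms. *)

From Stdlib Require Import Reals Lra.
Open Scope R_scope.

Definition bvec (i : idx) : V4 :=
  match i with
  | Io => mkV4 1 0 0 0
  | Ia => mkV4 0 1 0 0
  | Ib => mkV4 0 0 1 0
  | Ic => mkV4 0 0 0 1
  end.

Lemma vdecomp x :
  x = vadd (vscale (co x) (bvec Io)) (vadd (vscale (ca x) (bvec Ia))
        (vadd (vscale (cb x) (bvec Ib)) (vscale (cc x) (bvec Ic)))).
Proof. destruct x; unfold vadd, vscale; simpl; f_equal; ring. Qed.

Lemma linear_vzero (f : V4 -> V4) :
  (forall t x, f (vscale t x) = vscale t (f x)) -> f vzero = vzero.
Proof.
  intros Hscale.
  replace vzero with (vscale 0 vzero) at 1 by (unfold vscale, vzero; simpl; f_equal; ring).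
  rewrite Hscale; unfold vscale, vzero; simpl; f_equal; ring.
Qed.

Lemma mkV4_inj a b c d a' b' c' d' :
  mkV4 a b c d = mkV4 a' b' c' d' -> a = a' /\ b = b' /\ c = c' /\ d = d'.
Proof. now intros [= -> -> -> ->]. Qed.

Lemma idempotent_real x : x * x = x -> x = 0 \/ x = 1.
Proof.
  intros Hx. destruct (Req_dec x 0) as [-> | Hx0]; [now left | right].
  apply (Rmult_eq_reg_l x); [lra | assumption].
Qed.

Section Product.

Variables lam bet : R.

Lemma bmul_coords x y :
  bmul lam bet x y = mkV4 (co x * co y)
    (lam * (co x * ca y + ca x * co y) + ca x * ca y
       + (lam - bet) / lam * (ca x * cb y + cb x * ca y))
    (lam * (co x * cb y + cb x * co y) + cb x * cb y
       + (lam + bet - 1) / lam * (ca x * cb y + cb x * ca y))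
    (ca x * cb y + cb x * ca y).
Proof. destruct x, y; unfold bmul, vadd, vscale, vzero; simpl; f_equal; ring. Qed.

Lemma bmul_bvec i j : bmul lam bet (bvec i) (bvec j) = tbl lam bet i j.
Proof. destruct i, j; rewrite bmul_coords; simpl; unfold vzero; f_equal; ring. Qed.

Lemma bmul_bvec_Ic_l x : bmul lam bet (bvec Ic) x = vzero.
Proof. rewrite bmul_coords; unfold vzero; simpl; f_equal; ring. Qed.

Lemma bmul_bvec_Io_r x :
  bmul lam bet x (bvec Io) = mkV4 (co x) (lam * ca x) (lam * cb x) 0.
Proof. rewrite bmul_coords; simpl; f_equal; ring. Qed.

Lemma bmul_idempotent_ab v :
  co v = 0 -> cc v = 0 -> bmul lam bet v v = v ->
  (ca v = 0 \/ ca v = 1) /\ (cb v = 0 \/ cb v = 1) /\ ca v * cb v = 0.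
Proof.
  intros Ho Hc Hv; rewrite bmul_coords in Hv.
  destruct v as [vo va vb vc]; cbn [co ca cb cc] in *; subst vo vc.
  apply mkV4_inj in Hv as (_ & Ea & Eb & Ec).
  rewrite Ec in Ea, Eb.
  split; [|split]; [apply idempotent_real; lra .. | lra].
Qed.

End Product.

Lemma det_ne0_of_inverse u1 u2 v1 v2 x1 x2 y1 y2 :
  x1 * u1 + x2 * v1 = 1 -> x1 * u2 + x2 * v2 = 0 ->
  y1 * u1 + y2 * v1 = 0 -> y1 * u2 + y2 * v2 = 1 ->
  u1 * v2 - u2 * v1 <> 0.
Proof.
  intros H1 H2 H3 H4 Hdet.
  assert (E : (u1 * v2 - u2 * v1) * (x1 * y2 - x2 * y1) = 1).
  { transitivity ((x1 * u1 + x2 * v1) * (y1 * u2 + y2 * v2)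
                  - (x1 * u2 + x2 * v2) * (y1 * u1 + y2 * v1)); [ring|].
    rewrite H1, H2, H3, H4; ring. }
  rewrite Hdet in E; lra.
Qed.

Lemma scalar_of_eigenbasis m11 m12 m21 m22 l u1 u2 v1 v2 :
  m11 * u1 + m12 * u2 = l * u1 -> m21 * u1 + m22 * u2 = l * u2 ->
  m11 * v1 + m12 * v2 = l * v1 -> m21 * v1 + m22 * v2 = l * v2 ->
  u1 * v2 - u2 * v1 <> 0 ->
  m11 = l /\ m12 = 0 /\ m21 = 0 /\ m22 = l.
Proof.
  intros Hu1 Hu2 Hv1 Hv2 Hdet.
  assert (C : forall a b, a * u1 + b * u2 = 0 -> a * v1 + b * v2 = 0 -> a = 0 /\ b = 0).
  { intros a b Hu Hv; split.
    - apply (Rmult_eq_reg_r (u1 * v2 - u2 * v1)); [|exact Hdet].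
      transitivity (v2 * (a * u1 + b * u2) - u2 * (a * v1 + b * v2)); [ring|].
      rewrite Hu, Hv; ring.
    - apply (Rmult_eq_reg_r (u1 * v2 - u2 * v1)); [|exact Hdet].
      transitivity (u1 * (a * v1 + b * v2) - v1 * (a * u1 + b * u2)); [ring|].
      rewrite Hu, Hv; ring. }
  destruct (C (m11 - l) m12) as [E11 E12]; [lra | lra |].
  destruct (C m21 (m22 - l)) as [E21 E22]; [lra | lra |].
  lra.
Qed.

(* [p], [q] are the [a]- and [b]-coordinates of an idempotent [o + p a + q b]
   whose multiplication operator is the scalar [l] on [span(a, b)] modulo [c];
   [k1], [k2] are the structure constants of [a o b]. *)
Lemma eigen_shift_zero lam bet k1 k2 p q l :
  0 < lam < 1 -> 0 < bet < 1 -> k1 * lam = lam - bet -> k2 * lam = lam + bet - 1 ->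
  k1 * p = 0 -> k2 * q = 0 -> lam + p + k1 * q = l -> lam + q + k2 * p = l ->
  p = 2 * lam * p + p * p -> q = 2 * lam * q + q * q -> p = 0.
Proof.
  intros Hlam Hbet Hk1 Hk2 Hp Hq E1 E2 Ip Iq.
  destruct (Req_dec p 0) as [| Hp0]; [assumption | exfalso].
  assert (k1_0 : k1 = 0) by (apply (Rmult_eq_reg_r p); lra).
  assert (p_val : p = 1 - 2 * lam) by (apply (Rmult_eq_reg_l p); lra).
  destruct (Req_dec q 0) as [-> | Hq0].
  - assert (k2_1 : k2 = 1) by (apply (Rmult_eq_reg_r p); lra).
    subst k1 k2; lra.
  - assert (k2_0 : k2 = 0) by (apply (Rmult_eq_reg_r q); lra).
    subst k1 k2; lra.
Qed.

Section Isomorphism.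

Variables lam bet lam' bet' : R.
Hypothesis Hlam : 0 < lam < 1.
Hypothesis Hlam' : 0 < lam' < 1.
Hypothesis Hbet : 0 < bet < 1.
Variable f : V4 -> V4.
Hypothesis Hf : alg_iso lam' bet' lam bet f.

Local Notation P := (f (bvec Io)).
Local Notation Q := (f (bvec Ia)).
Local Notation S := (f (bvec Ib)).
Local Notation T := (f (bvec Ic)).

Lemma iso_coords x :
  f x = mkV4 (co x * co P + ca x * co Q + cb x * co S + cc x * co T)
             (co x * ca P + ca x * ca Q + cb x * ca S + cc x * ca T)
             (co x * cb P + ca x * cb Q + cb x * cb S + cc x * cb T)
             (co x * cc P + ca x * cc Q + cb x * cc S + cc x * cc T).
Proof.
  destruct Hf as (Hadd & Hscale & _).
  rewrite (vdecomp x) at 1; rewrite !Hadd, !Hscale.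
  unfold vadd, vscale; cbn [co ca cb cc]; f_equal; ring.
Qed.

Lemma iso_bvec_mul i j :
  bmul lam bet (f (bvec i)) (f (bvec j)) = f (tbl lam' bet' i j).
Proof. destruct Hf as (_ & _ & _ & _ & Hmul). now rewrite <- Hmul, bmul_bvec. Qed.

Local Ltac image_mul_eq proj i j H :=
  pose proof (f_equal proj (iso_bvec_mul i j)) as H;
  rewrite bmul_coords, (iso_coords (tbl lam' bet' i j)) in H;
  cbn [co ca cb cc tbl] in H.

Lemma iso_image_annihilator : co T = 0 /\ ca T = 0 /\ cb T = 0.
Proof.
  destruct Hf as (_ & Hscale & _ & Hsurj & Hmul).
  destruct (Hsurj (bvec Io)) as [xo Hxo].
  assert (E : bmul lam bet T (bvec Io) = vzero)
    by now rewrite <- Hxo, <- Hmul, bmul_bvec_Ic_l, (linear_vzero f Hscale).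
  rewrite bmul_bvec_Io_r in E; unfold vzero in E.
  pose proof (f_equal co E); pose proof (f_equal ca E); pose proof (f_equal cb E).
  cbn [co ca cb] in *.
  repeat split; [lra | nra | nra].
Qed.

Lemma iso_image_co : co P = 1 /\ co Q = 0 /\ co S = 0.
Proof.
  destruct iso_image_annihilator as (T0 & _ & _).
  image_mul_eq co Io Io PP.
  image_mul_eq co Ia Ia QQ.
  image_mul_eq co Ib Ib SS.
  image_mul_eq co Io Ia PQ.
  image_mul_eq co Io Ib PS.
  assert (P01 : co P = 0 \/ co P = 1) by (apply idempotent_real; lra).
  assert (Q0 : co Q = 0).
  { destruct (idempotent_real (co Q)) as [| Q1]; [lra | assumption |].
    rewrite Q1 in PQ; lra. }
  assert (S0 : co S = 0).
  { destruct (idempotent_real (co S)) as [| S1]; [lra | assumption |].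
    rewrite S1 in PS; lra. }
  repeat split; try assumption.
  destruct P01 as [P0 |]; [exfalso | assumption].
  destruct Hf as (_ & _ & _ & Hsurj & _).
  destruct (Hsurj (mkV4 1 0 0 0)) as [xo Hxo].
  apply (f_equal co) in Hxo; rewrite iso_coords in Hxo; cbn [co] in Hxo.
  rewrite P0, Q0, S0, T0 in Hxo; lra.
Qed.

Lemma iso_image_det : ca Q * cb S - cb Q * ca S <> 0.
Proof.
  destruct iso_image_annihilator as (T0 & T1 & T2).
  destruct iso_image_co as (P0 & Q0 & S0).
  destruct Hf as (_ & _ & _ & Hsurj & _).
  destruct (Hsurj (mkV4 0 1 0 0)) as [xa Hxa].
  destruct (Hsurj (mkV4 0 0 1 0)) as [xb Hxb].
  rewrite iso_coords in Hxa, Hxb.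
  apply mkV4_inj in Hxa as (Ea0 & Ea1 & Ea2 & _).
  apply mkV4_inj in Hxb as (Eb0 & Eb1 & Eb2 & _).
  rewrite P0, Q0, S0, T0 in Ea0, Eb0.
  rewrite T1 in Ea1, Eb1; rewrite T2 in Ea2, Eb2.
  apply (det_ne0_of_inverse _ _ _ _ (ca xa) (cb xa) (ca xb) (cb xb)); nra.
Qed.

(* Modulo [c], multiplication by [f o] acts on [span(a, b)] by the matrix below;
   the images of [a] and [b] are independent eigenvectors for [lam'], so it is scalar. *)
Lemma iso_image_o_eigen :
  (lam - bet) / lam * ca P = 0 /\ (lam + bet - 1) / lam * cb P = 0 /\
  lam + ca P + (lam - bet) / lam * cb P = lam' /\
  lam + cb P + (lam + bet - 1) / lam * ca P = lam'.
Proof.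
  destruct iso_image_annihilator as (_ & T1 & T2).
  destruct iso_image_co as (P0 & Q0 & S0).
  image_mul_eq ca Io Ia PQa. image_mul_eq cb Io Ia PQb.
  image_mul_eq ca Io Ib PSa. image_mul_eq cb Io Ib PSb.
  rewrite P0, Q0, S0 in *.
  destruct (scalar_of_eigenbasis
              (lam + ca P + (lam - bet) / lam * cb P) ((lam - bet) / lam * ca P)
              ((lam + bet - 1) / lam * cb P) (lam + cb P + (lam + bet - 1) / lam * ca P)
              lam' (ca Q) (cb Q) (ca S) (cb S)) as (E11 & E12 & E21 & E22);
    [lra | lra | lra | lra | exact iso_image_det |].
  auto.
Qed.

Lemma iso_image_o : ca P = 0 /\ cb P = 0.
Proof.
  destruct iso_image_co as (P0 & _ & _).
  destruct iso_image_o_eigen as (E1 & E2 & E3 & E4).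
  image_mul_eq ca Io Io PPa. image_mul_eq cb Io Io PPb.
  rewrite P0 in PPa, PPb.
  assert (K1 : (lam - bet) / lam * lam = lam - bet) by (field; lra).
  assert (K2 : (lam + bet - 1) / lam * lam = lam + bet - 1) by (field; lra).
  assert (IPa : ca P = 2 * lam * ca P + ca P * ca P).
  { replace ((lam - bet) / lam * (ca P * cb P + cb P * ca P))
      with (2 * cb P * ((lam - bet) / lam * ca P)) in PPa by ring.
    rewrite E1 in PPa; lra. }
  assert (IPb : cb P = 2 * lam * cb P + cb P * cb P).
  { replace ((lam + bet - 1) / lam * (ca P * cb P + cb P * ca P))
      with (2 * ca P * ((lam + bet - 1) / lam * cb P)) in PPb by ring.
    rewrite E2 in PPb; lra. }
  split.
  - exact (eigen_shift_zero lam bet _ _ _ _ lam' Hlam Hbet K1 K2 E1 E2 E3 E4 IPa IPb).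
  - apply (eigen_shift_zero lam (1 - bet) ((lam + bet - 1) / lam) ((lam - bet) / lam)
             (cb P) (ca P) lam'); (lra || assumption).
Qed.

Lemma iso_lam_eq : lam' = lam.
Proof.
  destruct iso_image_o as (Pa & Pb).
  destruct iso_image_o_eigen as (_ & _ & E & _).
  rewrite Pa, Pb in E; lra.
Qed.

Lemma iso_image_cc : cc Q = 0 /\ cc S = 0.
Proof.
  destruct iso_image_o as (Pa & Pb).
  image_mul_eq cc Io Ia PQ. image_mul_eq cc Io Ib PS.
  rewrite Pa, Pb in PQ, PS.
  split; nra.
Qed.

Lemma iso_image_ab :
  (ca Q = 1 /\ cb Q = 0 /\ ca S = 0 /\ cb S = 1) \/
  (ca Q = 0 /\ cb Q = 1 /\ ca S = 1 /\ cb S = 0).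
Proof.
  destruct iso_image_co as (_ & Q0 & S0).
  destruct iso_image_cc as (Qc & Sc).
  pose proof iso_image_det as D.
  destruct (bmul_idempotent_ab lam bet Q Q0 Qc (iso_bvec_mul Ia Ia)) as ([Qa|Qa] & [Qb|Qb] & HQ);
  destruct (bmul_idempotent_ab lam bet S S0 Sc (iso_bvec_mul Ib Ib)) as ([Sa|Sa] & [Sb|Sb] & HS);
    rewrite ?Qa, ?Qb, ?Sa, ?Sb in *; lra.
Qed.

Lemma iso_params : lam' = lam /\ (bet' = bet \/ bet' = 1 - bet).
Proof.
  destruct iso_image_co as (_ & Q0 & S0).
  destruct iso_image_annihilator as (_ & T1 & _).
  image_mul_eq ca Ia Ib QS.
  rewrite Q0, S0, T1 in QS.
  destruct iso_image_ab as [(Qa & Qb & Sa & Sb) | (Qa & Qb & Sa & Sb)];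
    rewrite Qa, Qb, Sa, Sb in QS;
  pose proof iso_lam_eq as L; split; try exact L; subst lam'; [left | right].
  - assert (E : (lam - bet) / lam = (lam - bet') / lam) by lra.
    apply Rdiv_eq_reg_r in E; lra.
  - assert (E : (lam - bet) / lam = (lam + bet' - 1) / lam) by lra.
    apply Rdiv_eq_reg_r in E; lra.
Qed.

End Isomorphism.

Lemma id_iso lam bet : alg_iso lam bet lam bet (fun x => x).
Proof. repeat split; auto. intros y; exists y; reflexivity. Qed.

Lemma swap_ab_iso lam bet :
  alg_iso lam (1 - bet) lam bet (fun x => mkV4 (co x) (cb x) (ca x) (cc x)).
Proof.
  split; [|split; [|split; [|split]]].
  - intros x y; reflexivity.
  - intros t x; reflexivity.
  - intros [] [] E; injection E; intros; subst; reflexivity.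
  - intros [yo ya yb yc]; exists (mkV4 yo yb ya yc); reflexivity.
  - intros x y; rewrite !bmul_coords; cbn [co ca cb cc]; f_equal; unfold Rdiv; ring.
Qed.

Theorem mainTheorem9 (lam bet lam' bet' : R) :
  0 < lam < 1 -> 0 < lam' < 1 -> 0 < bet < 1 -> 0 < bet' < 1 ->
  (B'_isomorphic lam' bet' lam bet <->
     (lam' = lam /\ (bet' = bet \/ bet' = 1 - bet))) /\
  ((lam', bet') <> (lam, bet) ->
     (B'_isomorphic lam' bet' lam bet <-> (lam' = lam /\ bet' = 1 - bet))).
Proof.
  intros Hlam Hlam' Hbet Hbet'.
  assert (Classif : B'_isomorphic lam' bet' lam bet <->
                    (lam' = lam /\ (bet' = bet \/ bet' = 1 - bet))).
  { split.
    - intros [f Hf]; exact (iso_params lam bet lam' bet' Hlam Hlam' Hbet f Hf).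
    - intros [-> [-> | ->]]; eexists; [apply id_iso | apply swap_ab_iso]. }
  split; [exact Classif|].
  intros Hne; rewrite Classif.
  split; [intros [-> [-> | ->]] | intros [-> ->]]; auto; now contradiction Hne.
Qed.
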